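(* Let $\Gamma^{(1)}$ and $\Gamma^{(2)}$ be finite undirected simple graphs. Then the group $G_{\Gamma^{(1)}\ast\Gamma^{(2)}}$ associated to their simplicial join is isomorphic to the direct product $G_{\Gamma^{(1)}}\times G_{\Gamma^{(2)}}$. More generally, for finite undirected simple graphs $\Gamma^{(1)},\dots,\Gamma^{(k)}$, $G_{\ast_{i=1}^k\Gamma^{(i)}}\cong\prod_{i=1}^k G_{\Gamma^{(i)}}$.
   Context: For a finite undirected simple graph $\Gamma$ with vertex set $\{x_1,\dots,x_n\}$ and edge set $E$, the group $G_\Gamma$ is defined by the presentation with generators $x_1,\dots,x_n$ and $y_{i,j}$ for each pair $i<j$ with $x_ix_j\notin E$, and relations $[x_j,x_i]=1$ if $x_ix_j\in E$; $[x_j,x_i]=y_{i,j}$ if $x_ix_j\notin E$ and $i<j$; and $[x_l,y_{i,j}]=1$ for all $l$ and all such $y_{i,j}$. The simplicial join $\ast_{i=1}^k\Gamma_i$ of graphs $\Gamma_i(V_i,E_i)$ is the graph with vertex set $\bigsqcup_i V_i$ and edge set $\bigsqcup_i E_i\cup\{vw: v\in V_i, w\in V_j, i<j\}$. *)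

From mathcomp Require Import all_boot.
Set Implicit Arguments. Unset Strict Implicit. Unset Printing Implicit Defensive.

Record sgroup := SGroup {
  sg_car : Type;
  sg_eqv : sg_car -> sg_car -> Prop;
  sg_mul : sg_car -> sg_car -> sg_car }.

Definition sg_iso (G H : sgroup) : Prop :=
  exists f : sg_car G -> sg_car H,
    [/\ (forall u v, sg_eqv u v -> sg_eqv (f u) (f v)),
        (forall u v, sg_eqv (f (sg_mul u v)) (sg_mul (f u) (f v))),
        (forall u v, sg_eqv (f u) (f v) -> sg_eqv u v)
      & (forall w, exists u, sg_eqv (f u) w)].

Definition sg_prod2 (G H : sgroup) : sgroup :=
  @SGroup (sg_car G * sg_car H)
    (fun a b => sg_eqv a.1 b.1 /\ sg_eqv a.2 b.2)
    (fun a b => (sg_mul a.1 b.1, sg_mul a.2 b.2)).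

Definition sg_prod (k : nat) (G : 'I_k -> sgroup) : sgroup :=
  @SGroup (forall i, sg_car (G i))
    (fun a b => forall i, sg_eqv (a i) (b i))
    (fun a b => fun i => sg_mul (a i) (b i)).

(* A letter (b, g) stands for g if b = false and g^-1 if b = true. *)
Definition word (gen : Type) := seq (bool * gen).

Inductive pres_eqv (gen : Type) (R : word gen -> Prop) : word gen -> word gen -> Prop :=
| pe_refl u : pres_eqv R u u
| pe_sym u v : pres_eqv R u v -> pres_eqv R v u
| pe_trans u v w : pres_eqv R u v -> pres_eqv R v w -> pres_eqv R u w
| pe_cancel u v b g : pres_eqv R (u ++ (b, g) :: (~~ b, g) :: v) (u ++ v)
| pe_rel u v r : R r -> pres_eqv R (u ++ r ++ v) (u ++ v).

Definition presented (gen : Type) (R : word gen -> Prop) : sgroup :=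
  @SGroup (word gen) (pres_eqv R) (fun u v => u ++ v).

Definition linv (gen : Type) (a : bool * gen) : bool * gen := (~~ a.1, a.2).
Definition commw (gen : Type) (a b : bool * gen) : word gen :=
  [:: linv a; linv b; a; b].

(* A graph on a vertex type T is given by an edge relation e, and the vertex
   ordering x_1 < ... < x_n by a relation lt.  Generators: x_v for each vertex v,
   and y_{i,j} for each pair i < j with x_i x_j not an edge. *)
Inductive ggen (T : Type) (e lt : rel T) : Type :=
| GX of T
| GY (i j : T) of (lt i j && ~~ e i j).

Inductive G_rel (T : Type) (e lt : rel T) : word (ggen e lt) -> Prop :=
| Gr_edge i j : lt i j -> e i j ->
    G_rel (commw (false, GX e lt j) (false, GX e lt i))
| Gr_y i j (h : lt i j && ~~ e i j) :
    G_rel (commw (false, GX e lt j) (false, GX e lt i) ++ [:: (true, GY h)])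
| Gr_central l i j (h : lt i j && ~~ e i j) :
    G_rel (commw (false, GX e lt l) (false, GY h)).

Definition G_graph (T : Type) (e lt : rel T) : sgroup := presented (@G_rel T e lt).

Definition G_of (n : nat) (e : rel 'I_n) : sgroup := G_graph e (fun i j => i < j).

Definition simple_graph (T : Type) (e : rel T) : Prop :=
  (forall u v, e u v = e v u) /\ (forall u, ~~ e u u).

Definition join2_rel (n1 n2 : nat) (e1 : rel 'I_n1) (e2 : rel 'I_n2) :
    rel ('I_n1 + 'I_n2) :=
  fun u v => match u, v with
  | inl a, inl b => e1 a b
  | inr a, inr b => e2 a b
  | _, _ => true end.

Definition join2_lt (n1 n2 : nat) : rel ('I_n1 + 'I_n2) :=
  fun u v => match u, v with
  | inl a, inl b => a < b
  | inr a, inr b => a < b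
  | inl _, inr _ => true
  | inr _, inl _ => false end.

Definition joinV (k : nat) (n : 'I_k -> nat) := {i : 'I_k & 'I_(n i)}.

Definition join_rel (k : nat) (n : 'I_k -> nat) (e : forall i, rel 'I_(n i)) :
    rel (joinV n) :=
  fun u v => if tag u == tag v then e (tag u) (tagged u) (tagged_as u v) else true.

Definition join_lt (k : nat) (n : 'I_k -> nat) : rel (joinV n) :=
  fun u v => (tag u < tag v) ||
             ((tag u == tag v) && (tagged u < tagged_as u v)).

From mathcomp Require Import all_boot.
From Stdlib Require Import Setoid Morphisms.
Set Implicit Arguments. Unset Strict Implicit. Unset Printing Implicit Defensive.

(* In a join, vertices of different factors are adjacent, so every generator
   y_{u,v} lives inside one factor and generators of different factors commute.
   Projecting onto each factor (x_u goes to x_u or 1 according as u lies in the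
   factor or not) gives a homomorphism to the product; its inverse concatenates
   the images of the factors in a fixed order.  The round trip is the identity
   on each factor, and on a word of the join it only moves letters past letters
   of other factors, with which they commute. *)

Add Parametric Relation (gen : Type) (R : word gen -> Prop) : (word gen) (pres_eqv R)
  reflexivity proved by (@pe_refl gen R)
  symmetry proved by (@pe_sym gen R)
  transitivity proved by (@pe_trans gen R) as pres_eqv_Equivalence.
#[global] Hint Resolve pe_refl : core.

Section PresentedGroup.
Variables (gen : Type) (R : word gen -> Prop).
Local Notation eqvR := (pres_eqv R).

Lemma pres_eqv_catl w u v : eqvR u v -> eqvR (w ++ u) (w ++ v).
Proof.
elim=> {u v} [u | u v _ IH | u v x _ Huv _ Hvx | u v b g | u v r Hr].
- by [].
- by symmetry.
- by transitivity (w ++ v).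
- by rewrite !catA; apply: pe_cancel.
- by have := pe_rel (w ++ u) v Hr; rewrite -!catA.
Qed.

Lemma pres_eqv_catr w u v : eqvR u v -> eqvR (u ++ w) (v ++ w).
Proof.
elim=> {u v} [u | u v _ IH | u v x _ Huv _ Hvx | u v b g | u v r Hr].
- by [].
- by symmetry.
- by transitivity (v ++ w).
- by rewrite -!catA; apply: pe_cancel.
- by rewrite -!catA; apply: pe_rel.
Qed.

#[global] Instance cat_pres_eqv : Proper (eqvR ==> eqvR ==> eqvR) cat.
Proof.
move=> u u' Hu v v' Hv.
by transitivity (u' ++ v); [apply: pres_eqv_catr | apply: pres_eqv_catl].
Qed.

#[global] Instance cons_pres_eqv : Proper (eq ==> eqvR ==> eqvR) cons.
Proof. by move=> a _ <- u v; apply: (pres_eqv_catl [:: a]). Qed.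

Lemma pres_eqv_rel r : R r -> eqvR r [::].
Proof. by move=> Rr; have := pe_rel [::] [::] Rr; rewrite /= cats0. Qed.

Lemma linvK : involutive (@linv gen).
Proof. by case=> b g; rewrite /linv negbK. Qed.

Lemma mul_linv a : eqvR [:: a; linv a] [::].
Proof. by case: a => b g; apply: (pe_cancel R [::] [::]). Qed.

Lemma mul_linvV a : eqvR [:: linv a; a] [::].
Proof. by rewrite -{2}(linvK a) mul_linv. Qed.

Definition word_inv (w : word gen) : word gen := rev (map (@linv gen) w).

Lemma word_inv_cat u v : word_inv (u ++ v) = word_inv v ++ word_inv u.
Proof. by rewrite /word_inv map_cat rev_cat. Qed.

Lemma word_invK : involutive word_inv.
Proof. by move=> w; rewrite /word_inv map_rev revK -map_comp (eq_map linvK) map_id. Qed.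

Lemma mulwV w : eqvR (w ++ word_inv w) [::].
Proof.
elim: w => [|a w IHw] //.
rewrite -cat1s word_inv_cat -catA (catA w) IHw; exact: mul_linv.
Qed.

Lemma mulVw w : eqvR (word_inv w ++ w) [::].
Proof. by rewrite -{2}(word_invK w) mulwV. Qed.

#[global] Instance word_inv_pres_eqv : Proper (eqvR ==> eqvR) word_inv.
Proof.
move=> u v Huv.
have := pres_eqv_catl (word_inv u) (pres_eqv_catr (word_inv v) Huv).
by rewrite mulwV cats0 catA mulVw cat0s => /pe_sym.
Qed.

Lemma eq_letter_of_mul_linv w a : eqvR (w ++ [:: linv a]) [::] -> eqvR w [:: a].
Proof.
move=> H; transitivity ((w ++ [:: linv a]) ++ [:: a]); last by rewrite H.
by rewrite -catA cat1s mul_linvV cats0.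
Qed.

Definition word_comm (u v : word gen) : word gen :=
  word_inv u ++ word_inv v ++ u ++ v.

#[global] Instance word_comm_pres_eqv : Proper (eqvR ==> eqvR ==> eqvR) word_comm.
Proof. by move=> u u' Hu v v' Hv; rewrite /word_comm Hu Hv. Qed.

Lemma word_comm0w v : eqvR (word_comm [::] v) [::].
Proof. exact: mulVw. Qed.

Lemma word_commw0 u : eqvR (word_comm u [::]) [::].
Proof. by rewrite /word_comm cats0; apply: mulVw. Qed.

Definition lcommute a c := eqvR [:: a; c] [:: c; a].

Lemma lcommute_sym a c : lcommute a c -> lcommute c a.
Proof. exact: pe_sym. Qed.

Lemma lcommute_of_commw a c : eqvR (commw a c) [::] -> lcommute a c.
Proof.
move=> H; rewrite /lcommute; transitivity ([:: c; a] ++ commw a c); last by rewrite H cats0.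
rewrite -[_ ++ _]/([:: c] ++ [:: a; linv a] ++ [:: linv c; a; c]) mul_linv.
by rewrite -[_ ++ _]/([:: c; linv c] ++ [:: a; c]) mul_linv.
Qed.

Lemma lcommute_linvl a c : lcommute a c -> lcommute (linv a) c.
Proof.
move=> Hac; rewrite /lcommute; transitivity ([:: linv a] ++ [:: c; a] ++ [:: linv a]).
  by rewrite -[X in pres_eqv _ _ X]/([:: linv a; c] ++ [:: a; linv a]) mul_linv cats0.
by rewrite -Hac -[X in pres_eqv _ X]/([:: linv a; a] ++ [:: c; linv a]) mul_linvV.
Qed.

Lemma lcommute_letters g g' b b' :
  lcommute (false, g) (false, g') -> lcommute (b, g) (b', g').
Proof.
move=> H; have {}H : lcommute (b, g) (false, g').
  by case: b H => // /(@lcommute_linvl (false, g)).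
by case: b' => //; apply/lcommute_sym/(@lcommute_linvl (false, g'))/lcommute_sym.
Qed.

Lemma lcommute_word a (P : pred (bool * gen)) w v :
  (forall c, P c -> lcommute a c) -> all P w -> eqvR (a :: w ++ v) (w ++ a :: v).
Proof.
move=> comm_a; elim: w => [|c w IHw] //= /andP[Pc /IHw <-].
by rewrite -[a :: c :: _]/([:: a; c] ++ w ++ v) comm_a.
Qed.

End PresentedGroup.

Definition flatmap (A B : Type) (f : A -> seq B) (s : seq A) : seq B :=
  flatten (map f s).

Lemma flatmap_cons (A B : Type) (f : A -> seq B) a s :
  flatmap f (a :: s) = f a ++ flatmap f s.
Proof. by []. Qed.

Lemma flatmap_seq1 (A B : Type) (f : A -> seq B) a : flatmap f [:: a] = f a.
Proof. exact: cats0. Qed.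

Lemma flatmap_cat (A B : Type) (f : A -> seq B) s1 s2 :
  flatmap f (s1 ++ s2) = flatmap f s1 ++ flatmap f s2.
Proof. by rewrite /flatmap map_cat flatten_cat. Qed.

Lemma flatmap_flatten (A B : Type) (f : A -> seq B) ss :
  flatmap f (flatten ss) = flatten (map (flatmap f) ss).
Proof. by elim: ss => //= s ss IHss; rewrite flatmap_cat IHss. Qed.

Lemma flatmap_comp (A B D : Type) (f : A -> seq B) (g : B -> seq D) s :
  flatmap g (flatmap f s) = flatmap (flatmap g \o f) s.
Proof. by elim: s => //= a s IHs; rewrite flatmap_cat IHs. Qed.

Lemma flatmap_nil (A B : Type) (f : A -> seq B) s :
  (forall a, f a = [::]) -> flatmap f s = [::].
Proof. by move=> f0; elim: s => // a s IHs; rewrite flatmap_cons IHs f0. Qed.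

Lemma all_flatmap (A B : Type) (P : pred B) (f : A -> seq B) s :
  (forall a, all P (f a)) -> all P (flatmap f s).
Proof. by move=> Pf; elim: s => //= a s IHs; rewrite all_cat Pf. Qed.

Lemma flatten_map_pred1 (I : eqType) (T : Type) (F : I -> seq T) s i :
  uniq s -> i \in s -> (forall j, j != i -> F j = [::]) -> flatten (map F s) = F i.
Proof.
move=> + si F0; case/splitPr: si => s1 s2.
rewrite cat_uniq /= negb_or => /and3P[_ /andP[i1 _] /andP[i2 _]].
have nil s' : i \notin s' -> flatten (map F s') = [::].
  by elim: s' => //= j s' IHs; rewrite in_cons negb_or eq_sym => /andP[/F0 -> /IHs].
by rewrite map_cat flatten_cat /= !nil // cats0.
Qed.

Section LetterSubstitution.
Variables (gen gen' : Type) (phi : gen -> word gen').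

Definition lsubst (a : bool * gen) : word gen' :=
  let: (b, g) := a in if b then word_inv (phi g) else phi g.

Lemma flatmap_lsubst_inv w :
  flatmap lsubst (word_inv w) = word_inv (flatmap lsubst w).
Proof.
elim: w => // a w IHw.
rewrite -cat1s !word_inv_cat !flatmap_cat IHw !flatmap_seq1.
by case: a => [[] g]; rewrite /= ?word_invK.
Qed.

Lemma flatmap_lsubst_commw g g' :
  flatmap lsubst (commw (false, g) (false, g')) = word_comm (phi g) (phi g').
Proof. by rewrite /flatmap /= !cats0. Qed.

Lemma flatmap_lsubst_eqv (R : word gen -> Prop) (R' : word gen' -> Prop) :
  (forall r, R r -> pres_eqv R' (flatmap lsubst r) [::]) ->
  forall u v, pres_eqv R u v -> pres_eqv R' (flatmap lsubst u) (flatmap lsubst v).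
Proof.
move=> phiR u v; elim=> {u v} [u | u v _ IH | u v x _ Huv _ Hvx | u v b g | u v r Rr].
- by [].
- by symmetry.
- by transitivity (flatmap lsubst v).
- have lsubst_cancel : pres_eqv R' (lsubst (b, g) ++ lsubst (~~ b, g)) [::].
    by case: b; [apply: mulVw | apply: mulwV].
  rewrite !flatmap_cat; apply: pres_eqv_catl.
  by rewrite !flatmap_cons catA lsubst_cancel.
- by rewrite !flatmap_cat (phiR _ Rr).
Qed.

End LetterSubstitution.

Lemma flatmap_lsubst_neg (A B D : Type) (phi : B -> word D) (psi : A -> word B) g :
  flatmap (lsubst phi) (lsubst psi (true, g)) = word_inv (flatmap (lsubst phi) (psi g)).
Proof. exact: flatmap_lsubst_inv. Qed.

Lemma flatmap_lsubst_comp_nil (A B D : Type) (phi : B -> word D) (psi : A -> word B) g b :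
  flatmap (lsubst phi) (psi g) = [::] -> flatmap (lsubst phi) (lsubst psi (b, g)) = [::].
Proof. by case: b => // H; rewrite flatmap_lsubst_neg H. Qed.

Lemma flatmap_lsubst_comp_letter (A B : Type) (R : word A -> Prop)
    (phi : B -> word A) (psi : A -> word B) g b :
  pres_eqv R (flatmap (lsubst phi) (psi g)) [:: (false, g)] ->
  pres_eqv R (flatmap (lsubst phi) (lsubst psi (b, g))) [:: (b, g)].
Proof. by case: b => // H; rewrite flatmap_lsubst_neg H. Qed.

Lemma flatmap_eqv_id (gen : Type) (R : word gen -> Prop) (f : bool * gen -> word gen) w :
  (forall a, pres_eqv R (f a) [:: a]) -> pres_eqv R (flatmap f w) w.
Proof. by move=> fa; elim: w => // a w IHw; rewrite flatmap_cons fa IHw. Qed.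

Lemma presented_iso (gen : Type) (R : word gen -> Prop) (H : sgroup)
    (f : word gen -> sg_car H) (g : sg_car H -> word gen) :
  (forall u v, pres_eqv R u v -> sg_eqv (f u) (f v)) ->
  (forall u v, sg_eqv (f (u ++ v)) (sg_mul (f u) (f v))) ->
  (forall x y, sg_eqv x y -> pres_eqv R (g x) (g y)) ->
  (forall w, pres_eqv R (g (f w)) w) ->
  (forall x, sg_eqv (f (g x)) x) ->
  sg_iso (presented R) H.
Proof.
move=> f_eqv f_mul g_eqv gK fK; exists f; split => //.
- by move=> u v /g_eqv; rewrite !gK.
- by move=> x; exists (g x).
Qed.

(* [sg_prod] is the case [J = 'I_k]. *)
Definition sg_prodT (J : Type) (G : J -> sgroup) : sgroup :=
  @SGroup (forall j, sg_car (G j))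
    (fun a b => forall j, sg_eqv (a j) (b j))
    (fun a b => fun j => sg_mul (a j) (b j)).

Lemma sg_iso_prod2 (G : sgroup) (F : bool -> sgroup) :
  sg_iso G (sg_prodT F) -> sg_iso G (sg_prod2 (F true) (F false)).
Proof.
case=> f [f_eqv f_mul f_inj f_onto].
exists (fun u => (f u true, f u false)); split=> /=.
- by move=> u v /f_eqv.
- by move=> u v; split; apply: f_mul.
- by move=> u v [H1 H2]; apply: f_inj => -[].
- case=> x y; have [u fu] := f_onto (fun b => if b as b return sg_car (F b) then x else y).
  by exists u; split; [apply: (fu true) | apply: (fu false)].
Qed.

Lemma commw_GX_GY (T : Type) (e lt : rel T) i j (h : lt i j && ~~ e i j) :
  pres_eqv (@G_rel T e lt) (commw (false, GX e lt j) (false, GX e lt i)) [:: (false, GY h)].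
Proof. by apply: eq_letter_of_mul_linv; apply: pres_eqv_rel; apply: Gr_y. Qed.

(* An abstract join: [block] splits the vertices into copies, via [inj] with
   partial inverse [proj], of the graphs [(C j, ej j, ltj j)], and vertices of
   different blocks are adjacent and comparable. *)
Section BlockJoin.
Local Unset Implicit Arguments.
Variables (V : Type) (e lt : rel V) (J : finType) (C : J -> Type).
Variables (ej ltj : forall j, rel (C j)).
Variables (block : V -> J) (inj : forall j, C j -> V) (proj : forall j, V -> option (C j)).
Hypothesis injK : forall j, pcancel (inj j) (proj j).
Hypothesis proj_other : forall j u, block u != j -> proj j u = None.
Hypothesis inj_onto : forall u, exists a, inj (block u) a = u.
Hypothesis block_inj : forall j a, block (inj j a) = j.
Hypothesis e_inj : forall j a b, e (inj j a) (inj j b) = ej j a b.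
Hypothesis lt_inj : forall j a b, lt (inj j a) (inj j b) = ltj j a b.
Hypothesis e_cross : forall u v, block u != block v -> e u v.
Hypothesis lt_cross : forall u v, block u != block v -> lt u v || lt v u.

Local Notation gen := (ggen e lt).
Local Notation gen_ j := (ggen (ej j) (ltj j)).
Local Notation eqv := (pres_eqv (@G_rel V e lt)).
Local Notation eqv_ j := (pres_eqv (@G_rel (C j) (ej j) (ltj j))).

Lemma block_eq_of_nonedge {u v} : ~~ e u v -> block u = block v.
Proof. by apply: contraNeq; apply: e_cross. Qed.

Definition xproj j u : word (gen_ j) :=
  if proj j u is Some a then [:: (false, GX (ej j) (ltj j) a)] else [::].

Lemma xproj_inj j a : xproj j (inj j a) = [:: (false, GX (ej j) (ltj j) a)].
Proof. by rewrite /xproj injK. Qed.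

Lemma xproj_other j u : block u != j -> xproj j u = [::].
Proof. by move=> /proj_other; rewrite /xproj => ->. Qed.

Lemma xproj_home {j u} :
  block u = j -> exists2 a, inj j a = u & xproj j u = [:: (false, GX (ej j) (ltj j) a)].
Proof.
move=> uj; have [a ua] : exists a, inj j a = u by rewrite -uj; apply: inj_onto.
by exists a; rewrite // -ua xproj_inj.
Qed.

Variant xproj_spec j u : word (gen_ j) -> Prop :=
  | XprojIn a of inj j a = u : xproj_spec j u [:: (false, GX (ej j) (ltj j) a)]
  | XprojOut : xproj_spec j u [::].

Lemma xprojP j u : xproj_spec j u (xproj j u).
Proof.
have [uj|uj] := eqVneq (block u) j; last by rewrite xproj_other //; apply: XprojOut.
by have [a ua ->] := xproj_home uj; apply: XprojIn.
Qed.

(* The image of y_{u,v} is a commutator rather than a y-generator of block [j],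
   which would need the non-adjacency proof transported to [C j]. *)
Definition to_block j (g : gen) : word (gen_ j) :=
  match g with
  | GX u => xproj j u
  | GY u v _ => word_comm (xproj j v) (xproj j u)
  end.

Definition of_block j (g : gen_ j) : word gen :=
  match g with
  | GX a => [:: (false, GX e lt (inj j a))]
  | GY a b _ => commw (false, GX e lt (inj j b)) (false, GX e lt (inj j a))
  end.

Definition split_word (w : word gen) j : word (gen_ j) := flatmap (lsubst (to_block j)) w.

Definition join_words (t : forall j, word (gen_ j)) : word gen :=
  flatten [seq flatmap (lsubst (of_block j)) (t j) | j <- enum J].

Lemma to_block_GY_other {j u v} (h : lt u v && ~~ e u v) :
  block u != j -> to_block j (GY h) = [::].
Proof.
move=> uj; have vj : block v != j by rewrite -(block_eq_of_nonedge (andP h).2).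
by rewrite /= !xproj_other.
Qed.

Lemma to_block_GY_home {j u v} (h : lt u v && ~~ e u v) :
  block u = j ->
  exists a b (h' : ltj j a b && ~~ ej j a b), eqv_ j (to_block j (GY h)) [:: (false, GY h')].
Proof.
move=> uj; have vj := etrans (esym (block_eq_of_nonedge (andP h).2)) uj.
have [a ua xu] := xproj_home uj; have [b vb xv] := xproj_home vj.
have h' : ltj j a b && ~~ ej j a b by rewrite -lt_inj -e_inj ua vb.
by exists a, b, h'; rewrite /= xu xv; apply: commw_GX_GY.
Qed.

Lemma to_block_rel j r : G_rel r -> eqv_ j (flatmap (lsubst (to_block j)) r) [::].
Proof.
case=> {r} [u v uv euv | u v h | l u v h].
- rewrite flatmap_lsubst_commw /=.
  case: (xprojP j u) => [a ua|]; last exact: word_commw0.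
  case: (xprojP j v) => [b vb|]; last exact: word_comm0w.
  rewrite -ua -vb lt_inj e_inj in uv euv.
  exact: pres_eqv_rel (Gr_edge uv euv).
- by rewrite flatmap_cat flatmap_lsubst_commw flatmap_seq1; apply: mulwV.
- rewrite flatmap_lsubst_commw -[to_block j (GX _ _ l)]/(xproj j l).
  have [uj|uj] := eqVneq (block u) j; last by rewrite to_block_GY_other // word_commw0.
  have [a [b [h' ->]]] := to_block_GY_home h uj.
  case: (xprojP j l) => [c _|]; last exact: word_comm0w.
  exact: pres_eqv_rel (Gr_central c h').
Qed.

Lemma of_block_GY {j a b} (h : ltj j a b && ~~ ej j a b) :
  exists h' : lt (inj j a) (inj j b) && ~~ e (inj j a) (inj j b),
    eqv (of_block j (GY h)) [:: (false, GY h')].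
Proof.
have h' : lt (inj j a) (inj j b) && ~~ e (inj j a) (inj j b) by rewrite lt_inj e_inj.
by exists h'; apply: commw_GX_GY.
Qed.

Lemma of_block_rel j r : G_rel r -> eqv (flatmap (lsubst (of_block j)) r) [::].
Proof.
case=> {r} [a b ab eab | a b h | c a b h].
- by rewrite flatmap_lsubst_commw; apply: pres_eqv_rel; apply: Gr_edge; rewrite ?lt_inj ?e_inj.
- by rewrite flatmap_cat flatmap_lsubst_commw flatmap_seq1; apply: mulwV.
- rewrite flatmap_lsubst_commw; have [h' ->] := of_block_GY h.
  exact: pres_eqv_rel (Gr_central (inj j c) h').
Qed.

Definition letter_block (a : bool * gen) : J :=
  match a.2 with GX u => block u | GY u _ _ => block u end.

Definition x_letter_in j (c : bool * gen) : bool :=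
  if c.2 is GX u then block u == j else false.

Definition block_part j (a : bool * gen) : word gen :=
  flatmap (lsubst (of_block j)) (lsubst (to_block j) a).

Lemma block_part_other j a : j != letter_block a -> block_part j a = [::].
Proof.
case: a => b g; rewrite /letter_block eq_sym /= => jb; apply: flatmap_lsubst_comp_nil.
by case: g jb => [u | u v h] ub; [rewrite /= xproj_other | rewrite to_block_GY_other].
Qed.

Lemma block_part_home a : eqv (block_part (letter_block a) a) [:: a].
Proof.
case: a => b g; apply: flatmap_lsubst_comp_letter.
case: g => [u | u v h] /=.
  have [a ua ->] := xproj_home (erefl (block u)).
  by rewrite /letter_block flatmap_seq1 /= ua.
have [a ua ->] := xproj_home (erefl (block u)).
have [c vc ->] := xproj_home (esym (block_eq_of_nonedge (andP h).2)).
by rewrite /letter_block flatmap_lsubst_commw /= ua vc; apply: commw_GX_GY.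
Qed.

Lemma all_x_letter_in_block_part j a : all (x_letter_in j) (block_part j a).
Proof.
case: a => b g; rewrite /block_part.
suff xg : all (x_letter_in j) (flatmap (lsubst (of_block j)) (to_block j g)).
  by case: b; rewrite // flatmap_lsubst_neg all_rev all_map.
case: g => [u | u v h] /=.
  by case: (xprojP j u) => [a _|] //; rewrite /= /x_letter_in /= block_inj eqxx.
case: (xprojP j u) => [a _|]; case: (xprojP j v) => [c _|] //;
  by rewrite /= /x_letter_in /= ?block_inj ?eqxx.
Qed.

Lemma lcommute_other_block j a c :
  x_letter_in j c -> j != letter_block a -> lcommute (@G_rel V e lt) a c.
Proof.
case: c => b' [l /eqP lj|//]; case: a => b g; rewrite -lj => lg; apply: lcommute_letters.
case: g lg => [u | u v h]; rewrite /letter_block /= => lu.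
  case/orP: (lt_cross _ _ lu) => [lt_lu | lt_ul].
    exact/lcommute_of_commw/pres_eqv_rel/(Gr_edge lt_lu (e_cross _ _ lu)).
  apply/lcommute_sym/lcommute_of_commw/pres_eqv_rel/(Gr_edge lt_ul).
  by rewrite e_cross // eq_sym.
exact/lcommute_sym/lcommute_of_commw/pres_eqv_rel/(Gr_central l h).
Qed.

Lemma flatten_block_parts a (W : forall j, word gen) :
  (forall j, all (x_letter_in j) (W j)) ->
  eqv (flatten [seq block_part j a ++ W j | j <- enum J])
      (a :: flatten [seq W j | j <- enum J]).
Proof.
(* Only the block of [a] contributes, and [a] commutes with the blocks before it. *)
move=> xW; have := enum_uniq J; have : letter_block a \in enum J by rewrite mem_enum.
case/splitPr=> s1 s2; rewrite cat_uniq /= negb_or => /and3P[_ /andP[a1 _] /andP[a2 _]].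
have drop_parts s : letter_block a \notin s -> [seq block_part j a ++ W j | j <- s] = map W s.
  move=> out; apply/eq_in_map => j js; rewrite block_part_other //.
  by apply: contraNneq out => <-.
rewrite !map_cat !flatten_cat /= !drop_parts // block_part_home.
pose other_x := [pred c | [exists j, x_letter_in j c && (j != letter_block a)]].
rewrite (@lcommute_word _ _ _ other_x) //.
  by move=> c /existsP[j /andP[xc ja]]; apply: lcommute_other_block xc ja.
elim: s1 a1 => //= j s1 IHs; rewrite in_cons negb_or eq_sym all_cat => /andP[ja /IHs ->].
by rewrite andbT; apply: sub_all (xW j) => c xc; apply/existsP; exists j; rewrite xc.
Qed.

Lemma join_wordsK w : eqv (join_words (split_word w)) w.
Proof.
elim: w => [|a w IHw]; first by rewrite /join_words; elim: (enum J).
transitivity (a :: join_words (split_word w)); last by rewrite IHw.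
rewrite /join_words /split_word; under eq_map do rewrite flatmap_cons flatmap_cat.
apply: flatten_block_parts => j.
by rewrite flatmap_comp; apply: all_flatmap => c; apply: all_x_letter_in_block_part.
Qed.

Definition cross_part i j (a : bool * gen_ j) : word (gen_ i) :=
  flatmap (lsubst (to_block i)) (lsubst (of_block j) a).

Lemma cross_part_other i j a : j != i -> cross_part i j a = [::].
Proof.
case: a => b g ji; apply: flatmap_lsubst_comp_nil.
have out x : xproj i (inj j x) = [::] by rewrite xproj_other // block_inj.
by case: g => [x | x y h]; rewrite ?flatmap_seq1 /= ?flatmap_lsubst_commw /= !out.
Qed.

Lemma cross_part_id i a : eqv_ i (cross_part i i a) [:: a].
Proof.
case: a => b g; apply: flatmap_lsubst_comp_letter.
case: g => [x | x y h]; first by rewrite flatmap_seq1 /= xproj_inj.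
by rewrite /= flatmap_lsubst_commw /= !xproj_inj; apply: commw_GX_GY.
Qed.

Lemma split_wordK t i : eqv_ i (split_word (join_words t) i) (t i).
Proof.
rewrite /split_word /join_words flatmap_flatten -map_comp.
have iJ : i \in enum J by rewrite mem_enum.
rewrite (flatten_map_pred1 (enum_uniq J) iJ) /=.
  by rewrite flatmap_comp; apply: flatmap_eqv_id; apply: cross_part_id.
by move=> j ji; rewrite /= flatmap_comp; apply: flatmap_nil => a; apply: cross_part_other.
Qed.

Lemma G_graph_block_iso : sg_iso (G_graph e lt) (sg_prodT (fun j => G_graph (ej j) (ltj j))).
Proof.
apply: (@presented_iso _ _ (sg_prodT (fun j => G_graph (ej j) (ltj j))) split_word join_words).
- by move=> u v uv j; apply: flatmap_lsubst_eqv uv; apply: to_block_rel.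
- by move=> u v j; rewrite /split_word flatmap_cat.
- move=> t t' tt'; rewrite /join_words; elim: (enum J) => //= j s ->.
  by rewrite (flatmap_lsubst_eqv (of_block_rel j) (tt' j)).
- exact: join_wordsK.
- by move=> t j; apply: split_wordK.
Qed.

End BlockJoin.

Section JoinOfFamily.
Local Unset Implicit Arguments.
Variables (k : nat) (n : 'I_k -> nat) (e : forall i, rel 'I_(n i)).

Definition join_inj i (a : 'I_(n i)) : joinV n := Tagged (fun i => 'I_(n i)) a.

(* [insub] transports [tagged u] along [tag u = i]. *)
Definition join_proj i (u : joinV n) : option 'I_(n i) :=
  if tag u == i then insub (val (tagged u)) else None.

Lemma join_iso : sg_iso (G_graph (join_rel e) (@join_lt k n)) (sg_prod (fun i => G_of (e i))).
Proof.
apply: (@G_graph_block_iso _ _ _ _ _ e (fun i (a b : 'I_(n i)) => a < b)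
          tag join_inj join_proj).
- by move=> i a; rewrite /join_proj eqxx valK.
- by move=> i u /negbTE; rewrite /join_proj => ->.
- by case=> i a; exists a.
- by [].
- by move=> i a b; rewrite /join_rel eqxx tagged_asE.
- by move=> i a b; rewrite /join_lt ltnn eqxx tagged_asE.
- by move=> u v /negbTE; rewrite /join_rel => ->.
- move=> u v; rewrite -(inj_eq val_inj) neq_ltn /join_lt.
  by case/orP=> ->; rewrite ?orbT.
Qed.

End JoinOfFamily.

Section JoinOfTwo.
Local Unset Implicit Arguments.
Variables (n1 n2 : nat) (e1 : rel 'I_n1) (e2 : rel 'I_n2).

Definition side_size (b : bool) := if b then n1 else n2.

Definition side_rel b : rel 'I_(side_size b) :=
  if b as b return rel 'I_(side_size b) then e1 else e2.

Definition side_inj b : 'I_(side_size b) -> 'I_n1 + 'I_n2 :=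
  if b as b return 'I_(side_size b) -> 'I_n1 + 'I_n2 then @inl _ _ else @inr _ _.

Definition side_proj b (u : 'I_n1 + 'I_n2) : option 'I_(side_size b) :=
  if b as b return option 'I_(side_size b)
  then (if u is inl a then Some a else None)
  else (if u is inr a then Some a else None).

Definition side (u : 'I_n1 + 'I_n2) : bool := if u is inl _ then true else false.

Lemma join2_iso :
  sg_iso (G_graph (join2_rel e1 e2) (@join2_lt n1 n2)) (sg_prod2 (G_of e1) (G_of e2)).
Proof.
refine (@sg_iso_prod2 _ (fun b => G_graph (side_rel b) (fun x y : 'I_(side_size b) => x < y))
  (@G_graph_block_iso _ _ _ _ _ side_rel (fun b x y => x < y) side side_inj side_proj
     _ _ _ _ _ _ _ _)).
- by case.
- by case; case.
- by case=> a; exists a.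
- by case.
- by case.
- by case.
- by case=> a; case.
- by case=> a; case.
Qed.

End JoinOfTwo.

Theorem lemma5p2 :
  (forall (n1 n2 : nat) (e1 : rel 'I_n1) (e2 : rel 'I_n2),
     simple_graph e1 -> simple_graph e2 ->
     sg_iso (G_graph (join2_rel e1 e2) (@join2_lt n1 n2))
            (sg_prod2 (G_of e1) (G_of e2))) /\
  (forall (k : nat) (n : 'I_k -> nat) (e : forall i, rel 'I_(n i)),
     (forall i, simple_graph (e i)) ->
     sg_iso (G_graph (join_rel e) (@join_lt k n))
            (sg_prod (fun i => G_of (e i)))).
Proof.
split=> [n1 n2 e1 e2 _ _ | k n e _]; [exact: join2_iso | exact: join_iso].
Qed.
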